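(* Let $(t:\mathcal L_1\to\mathcal L_0,\llbracket\cdot_\lambda\cdot\rrbracket,\mathcal N_0,\mathcal N_1)$ be a strict $2$-term Nijenhuis $\mathcal L_\infty$-conformal algebra. Then $(\mathcal L_0\oplus\mathcal L_1,[\cdot_\lambda\cdot],\mathcal N_0\oplus\mathcal N_1)$ is a Nijenhuis Lie conformal algebra, where $$[(p,m)_\lambda(q,n)]:=\big(\llbracket p_\lambda q\rrbracket,\ \llbracket p_\lambda n\rrbracket-\llbracket q_{-\partial-\lambda}m\rrbracket+\llbracket t(m)_\lambda n\rrbracket\big),\qquad (p,m),(q,n)\in\mathcal L_0\oplus\mathcal L_1 .$$
   Context: All spaces are over $\mathbb C$. A Lie conformal algebra is a $\mathbb C[\partial]$-module with a $\mathbb C$-bilinear $\lambda$-bracket satisfying $[\partial a_\lambda b]=-\lambda[a_\lambda b]$, $[a_\lambda\partial b]=(\partial+\lambda)[a_\lambda b]$, $[a_\lambda b]=-[b_{-\partial-\lambda}a]$, $[a_\lambda[b_\mu c]]=[[a_\lambda b]_{\lambda+\mu}c]+[b_\mu[a_\lambda c]]$; a Nijenhuis operator is a $\mathbb C[\partial]$-linear $\mathcal N$ with $[\mathcal N(p)_\lambda\mathcal N(q)]=\mathcal N([\mathcal N(p)_\lambda q]+[p_\lambda\mathcal N(q)]-\mathcal N([p_\lambda q]))$, and a Nijenhuis Lie conformal algebra is a Lie conformal algebra with a Nijenhuis operator. A strict $2$-term Nijenhuis $\mathcal L_\infty$-conformal algebra consists of a $\mathbb C[\partial]$-linear map $t:\mathcal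 L_1\to\mathcal L_0$, conformal sesquilinear $\mathbb C$-bilinear brackets $\llbracket\cdot_\lambda\cdot\rrbracket$: $\mathcal L_0\otimes\mathcal L_0\to\mathcal L_0[\lambda]$, $\mathcal L_0\otimes\mathcal L_1\to\mathcal L_1[\lambda]$, $\mathcal L_1\otimes\mathcal L_0\to\mathcal L_1[\lambda]$ (with $\llbracket m_\lambda n\rrbracket=0$ on $\mathcal L_1$), and $\mathbb C[\partial]$-linear $\mathcal N_0:\mathcal L_0\to\mathcal L_0$, $\mathcal N_1:\mathcal L_1\to\mathcal L_1$, such that for all $p,q,r\in\mathcal L_0$, $m,n\in\mathcal L_1$: $\llbracket p_\lambda m\rrbracket=-\llbracket m_{-\partial-\lambda}p\rrbracket$; $\llbracket p_\lambda q\rrbracket=-\llbracket q_{-\partial-\lambda}p\rrbracket$; $t\llbracket p_\lambda m\rrbracket=\llbracket p_\lambda t(m)\rrbracket$; $\llbracket t(m)_\lambda n\rrbracket=\llbracket m_\lambda t(n)\rrbracket$; $\llbracket p_\lambda\llbracket q_\mu r\rrbracket\rrbracket-\llbracket\llbracket p_\lambda q\rrbracket_{\lambda+\mu}r\rrbracket-\llbracket q_\mu\llbracket p_\lambda r\rrbracket\rrbracket=0$; $\llbracket p_\lambda\llbracket q_\mu m\rrbracket\rrbracket-\llbracket\llbracket p_\lambda q\rrbracket_{\lambda+\mu}m\rrbracket-\llbracket q_\mu\llbracket p_\lambda m\rrbracket\rrbracket=0$; $t\circ\mathcal N_1=\mathcal N_0\circ t$; $\mathcal N_0(\llbracket\mathcal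 N_0(p)_\lambda q\rrbracket+\llbracket p_\lambda\mathcal N_0(q)\rrbracket-\mathcal N_0\llbracket p_\lambda q\rrbracket)=\llbracket\mathcal N_0(p)_\lambda\mathcal N_0(q)\rrbracket$; $\mathcal N_1(\llbracket\mathcal N_0(p)_\lambda m\rrbracket+\llbracket p_\lambda\mathcal N_1(m)\rrbracket-\mathcal N_1\llbracket p_\lambda m\rrbracket)=\llbracket\mathcal N_0(p)_\lambda\mathcal N_1(m)\rrbracket$. *)

From mathcomp Require Import all_boot all_algebra.
From mathcomp Require Import complex Rstruct.
Set Implicit Arguments. Unset Strict Implicit. Unset Printing Implicit Defensive.
Import GRing.Theory.
Local Open Scope ring_scope.

Definition Cplx : fieldType := complex Rdefinitions.R.

(* Polynomials in one variable lambda with coefficients in a module L:  *)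
(* a lambda-bracket returns a coefficient list s : seq L, representing *)
(* sum_j lambda^j s`_j.  Two polynomials are equal iff all their       *)
(* coefficients agree, so identities are stated coefficientwise via    *)
(* [pc s j] = coefficient of lambda^j (0 beyond the list).             *)
Definition pc (L : zmodType) (s : seq L) (j : nat) : L := nth 0 s j.

(* multiplication by lambda, on coefficient functions *)
Definition lam (L : zmodType) (f : nat -> L) : nat -> L :=
  fun j => if j is j'.+1 then f j' else 0.

(* Given s representing P(lambda) = sum_k lambda^k s_k, [negsub D s]   *)
(* is the coefficient function of P(-D-lambda) = sum_k (-D-lambda)^k s_k,*)
(* computed by Horner's scheme: P = s_0 + X (s_1 + X (...)), X := -D-lambda. *)
Definition negsub (L : zmodType) (D : L -> L) (s : seq L) : nat -> L :=
  foldr (fun c r j => (if j == 0%N then c else 0) - D (r j) - lam r j)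
        (fun _ => 0) s.

(* Given s representing P(nu) = sum_l nu^l s_l, [sub2 s i j] is the    *)
(* coefficient of lambda^i mu^j in P(lambda+mu) (binomial expansion).  *)
Definition sub2 (L : zmodType) (s : seq L) (i j : nat) : L :=
  pc s (i + j) *+ 'C(i + j, i).

(* Lie conformal algebras.  A C[∂]-module is a K-module L together with *)
(* a K-linear endomorphism D (the action of ∂).                         *)
Section LCA.
Variables (K : pzRingType) (L : lmodType K).

Definition lbilinear (L1 L2 L3 : lmodType K) (br : L1 -> L2 -> seq L3) : Prop :=
  (forall (k : K) a a' b j, pc (br (k *: a + a') b) j = k *: pc (br a b) j + pc (br a' b) j)
  /\ (forall (k : K) a b b' j, pc (br a (k *: b + b')) j = k *: pc (br a b) j + pc (br a b') j).

Definition sesquilinear (L1 L2 L3 : lmodType K) (D1 : L1 -> L1) (D2 : L2 -> L2)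
    (D3 : L3 -> L3) (br : L1 -> L2 -> seq L3) : Prop :=
  (forall a b j, pc (br (D1 a) b) j = - lam (pc (br a b)) j)
  /\ (forall a b j, pc (br a (D2 b)) j = D3 (pc (br a b) j) + lam (pc (br a b)) j).

(* [[a_λ b]_{λ+μ} c], coefficient of λ^i μ^j: with [a_λ b] = Σ_k λ^k d_k,   *)
(* it is Σ_k λ^k [d_k _{λ+μ} c].                                          *)
Definition jac_mid (L1 L2 L3 L4 : zmodType) (br12 : L1 -> L2 -> seq L3)
    (br34 : L3 -> L4 -> seq L4) (a : L1) (b : L2) (c : L4) (i j : nat) : L4 :=
  \sum_(k < i.+1) sub2 (br34 (pc (br12 a b) k) c) (i - k) j.

Definition is_LieConformal (D : L -> L) (br : L -> L -> seq L) : Prop :=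
  [/\ linear D,
      lbilinear br,
      sesquilinear D D D br,
      (forall a b j, pc (br a b) j = - negsub D (br b a) j) &
      (forall a b c i j,
         pc (br a (pc (br b c) j)) i
         = jac_mid br br a b c i j + pc (br b (pc (br a c) i)) j)].

Definition is_Nijenhuis (D : L -> L) (br : L -> L -> seq L) (N : L -> L) : Prop :=
  [/\ linear N, (forall x, N (D x) = D (N x)) &
      forall p q j, pc (br (N p) (N q)) j
        = N (pc (br (N p) q) j + pc (br p (N q)) j - N (pc (br p q) j))].

Definition is_NijenhuisLCA (D : L -> L) (br : L -> L -> seq L) (N : L -> L) : Prop :=
  is_LieConformal D br /\ is_Nijenhuis D br N.

End LCA.

Section TwoTerm.
Variables (K : pzRingType) (L0 L1 : lmodType K).

Record strict2NLinfty (D0 : L0 -> L0) (D1 : L1 -> L1) (t : L1 -> L0)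
    (b00 : L0 -> L0 -> seq L0) (b01 : L0 -> L1 -> seq L1) (b10 : L1 -> L0 -> seq L1)
    (N0 : L0 -> L0) (N1 : L1 -> L1) : Prop := {
  s2_D0 : linear D0;
  s2_D1 : linear D1;
  s2_t_lin : linear t;
  s2_t_D : forall m, t (D1 m) = D0 (t m);
  s2_b00_bil : lbilinear b00;
  s2_b01_bil : lbilinear b01;
  s2_b10_bil : lbilinear b10;
  s2_b00_ses : sesquilinear D0 D0 D0 b00;
  s2_b01_ses : sesquilinear D0 D1 D1 b01;
  s2_b10_ses : sesquilinear D1 D0 D1 b10;
  s2_N0_lin : linear N0;
  s2_N1_lin : linear N1;
  s2_N0_D : forall p, N0 (D0 p) = D0 (N0 p);
  s2_N1_D : forall m, N1 (D1 m) = D1 (N1 m);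
  s2_skew01 : forall p m j, pc (b01 p m) j = - negsub D1 (b10 m p) j;
  s2_skew00 : forall p q j, pc (b00 p q) j = - negsub D0 (b00 q p) j;
  s2_t_br : forall p m j, t (pc (b01 p m) j) = pc (b00 p (t m)) j;
  s2_t_sym : forall m n j, pc (b01 (t m) n) j = pc (b10 m (t n)) j;
  s2_jac000 : forall p q r i j,
    pc (b00 p (pc (b00 q r) j)) i - jac_mid b00 b00 p q r i j
      - pc (b00 q (pc (b00 p r) i)) j = 0;
  s2_jac001 : forall p q m i j,
    pc (b01 p (pc (b01 q m) j)) i - jac_mid b00 b01 p q m i j
      - pc (b01 q (pc (b01 p m) i)) j = 0;
  s2_tN : forall m, t (N1 m) = N0 (t m);
  s2_N0 : forall p q j,
    N0 (pc (b00 (N0 p) q) j + pc (b00 p (N0 q)) j - N0 (pc (b00 p q) j))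
      = pc (b00 (N0 p) (N0 q)) j;
  s2_N1 : forall p m j,
    N1 (pc (b01 (N0 p) m) j + pc (b01 p (N1 m)) j - N1 (pc (b01 p m) j))
      = pc (b01 (N0 p) (N1 m)) j
}.

Definition sumD (D0 : L0 -> L0) (D1 : L1 -> L1) (x : L0 * L1) : L0 * L1 :=
  (D0 x.1, D1 x.2).

Definition sumN (N0 : L0 -> L0) (N1 : L1 -> L1) (x : L0 * L1) : L0 * L1 :=
  (N0 x.1, N1 x.2).

(* [(p,m)_λ(q,n)] = (⟦p_λ q⟧, ⟦p_λ n⟧ - ⟦q_{-∂-λ} m⟧ + ⟦t(m)_λ n⟧).
   Returned as a coefficient list; its length bounds the degree of every
   term (negsub D s has degree < size s). *)
Definition sum_bracket (D1 : L1 -> L1) (t : L1 -> L0)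
    (b00 : L0 -> L0 -> seq L0) (b01 : L0 -> L1 -> seq L1)
    (x y : L0 * L1) : seq (L0 * L1) :=
  let: (p, m) := x in let: (q, n) := y in
  mkseq (fun j => (pc (b00 p q) j,
                   pc (b01 p n) j - negsub D1 (b01 q m) j + pc (b01 (t m) n) j))
        (size (b00 p q) + size (b01 p n) + size (b01 q m) + size (b01 (t m) n)).

End TwoTerm.

(* Polynomials in λ (and μ) are handled through their
   coefficient functions, on which the substitution of -∂-λ for λ is additive,
   involutive and commutes with every map commuting with ∂; with these facts,
   bilinearity, sesquilinearity, skew-symmetry and the Nijenhuis identity of the sum
   reduce componentwise to the axioms of the 2-term algebra.
   The Jacobiator J(a, b, c) is additive in each argument, so for the Jacobi identity
   each argument may be taken in L0 or in L1.  The cases (L0, L0, L0), (L0, L0, L1),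
   (L0, L1, L1) and (L1, L1, L1) are the Jacobi identities assumed on L0 ⊗ L0 ⊗ L0 and
   L0 ⊗ L0 ⊗ L1, applied to t(m) and t(n) where needed.  The other four follow because,
   for any skew-symmetric conformal sesquilinear λ-bracket,
   J(b, a, c)(μ, λ) = -J(a, b, c)(λ, μ) and J(a, b, c)(λ, μ) = -J(a, c, b)(λ, -∂-λ-μ). *)

From HB Require Import structures.
From mathcomp Require Import all_boot all_algebra.
From mathcomp Require Import complex Rstruct.
From mathcomp Require Import boolp functions zify.
Set Implicit Arguments. Unset Strict Implicit. Unset Printing Implicit Defensive.
Import GRing.Theory.
Local Open Scope ring_scope.

Section ZmodMorphism.
Variables (U V : zmodType) (f : U -> V).
Hypothesis f_additive : zmod_morphism f.

Let F : {additive U -> V} := HB.pack f (GRing.isZmodMorphism.Build U V f f_additive).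

Lemma zmorph0 : f 0 = 0. Proof. exact: (raddf0 F). Qed.
Lemma zmorphN : {morph f : x / - x}. Proof. exact: (raddfN F). Qed.
Lemma zmorphD : {morph f : x y / x + y}. Proof. exact: (raddfD F). Qed.
Lemma zmorphMn n : {morph f : x / x *+ n}. Proof. exact: (raddfMn F). Qed.
Lemma zmorph_sum I r (P : pred I) (E : I -> U) :
  f (\sum_(i <- r | P i) E i) = \sum_(i <- r | P i) f (E i).
Proof. exact: (raddf_sum F). Qed.

End ZmodMorphism.

Lemma zmod_morphism_comp (U V W : zmodType) (f : V -> W) (g : U -> V) :
  zmod_morphism f -> zmod_morphism g -> zmod_morphism (f \o g).
Proof. by move=> fA gA x y /=; rewrite gA fA. Qed.

Lemma addrBD_ACA (V : zmodType) (x y z x' y' z' : V) :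
  (x + x') - (y + y') + (z + z') = (x - y + z) + (x' - y' + z').
Proof. by rewrite opprD (addrACA x) (addrACA (x - y)). Qed.

Lemma addrBB_ACA (V : zmodType) (x y z x' y' z' : V) :
  (x + x') - (y + y') - (z + z') = (x - y - z) + (x' - y' - z').
Proof. by rewrite !opprD (addrACA x) (addrACA (x - y)). Qed.

Lemma opprB_ACA (V : zmodType) (a b c d : V) : - (a - b) - (c - d) = (- a - c) - (- b - d).
Proof. by rewrite !opprD !opprK addrACA. Qed.

Lemma oppr_sub3 (V : zmodType) (x y z : V) : - (x - y - z) = - x - - z - - y.
Proof. by rewrite !opprD !opprK addrAC. Qed.

Lemma oppr_sub3_rev (V : zmodType) (x y z : V) : - (x - y - z) = z - - y - x.
Proof. by rewrite !opprD !opprK [RHS]addrC [z + y]addrC addrA. Qed.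

Lemma nijenhuis_comb (V : zmodType) (f : V -> V) : zmod_morphism f ->
  forall a1 b1 c1 a2 b2 c2 a3 b3 c3,
  f (a1 + b1 - f c1) - f (a2 + b2 - f c2) + f (a3 + b3 - f c3)
  = f ((a1 - a2 + a3) + (b1 - b2 + b3) - f (c1 - c2 + c3)).
Proof.
move=> fA a1 b1 c1 a2 b2 c2 a3 b3 c3; rewrite -fA -(zmorphD fA); congr (f _).
by rewrite addrBD_ACA addrBD_ACA (zmorphD fA) fA !opprD.
Qed.

Lemma fun0E (T : Type) (V : zmodType) (x : T) : (0 : T -> V) x = 0.
Proof. by []. Qed.

Section CoefFun.
Variable V : zmodType.

Definition deg_lt (n : nat) (f : nat -> V) := forall k, (n <= k)%N -> f k = 0.

Definition coefC (c : V) : nat -> V := fun j => if j == 0%N then c else 0.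

Lemma coefC_additive : zmod_morphism coefC.
Proof. by move=> x y; apply/funext=> j; rewrite !fctE /coefC; case: ifP; rewrite ?subr0. Qed.

Lemma lam_additive : zmod_morphism (@lam V).
Proof. by move=> f g; apply/funext=> -[|j]; rewrite !fctE /= ?subr0. Qed.

Lemma deg_lt_pc (s : seq V) n : (size s <= n)%N -> deg_lt n (pc s).
Proof. by move=> sn k nk; rewrite /pc nth_default // (leq_trans sn). Qed.

Lemma deg_lt_widen n m f : (n <= m)%N -> deg_lt n f -> deg_lt m f.
Proof. by move=> nm fn k mk; apply: fn; apply: leq_trans mk. Qed.

Lemma lamBD (f g h : nat -> V) j :
  lam (fun k => f k - g k + h k) j = lam f j - lam g j + lam h j.
Proof. by case: j => //=; rewrite subrr addr0. Qed.

Lemma pc_mkseq (F : nat -> V) n : deg_lt n F -> pc (mkseq F n) = F.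
Proof.
move=> Fn; apply/funext => k; rewrite /pc.
case: (ltnP k n) => kn; first by rewrite nth_mkseq.
by rewrite nth_default ?size_mkseq // Fn.
Qed.

Lemma iter_lam k (f : nat -> V) j :
  iter k (@lam V) f j = if (k <= j)%N then f (j - k)%N else 0.
Proof. by elim: k j => [|k IHk] [|j] /=; rewrite ?subn0. Qed.

End CoefFun.

Lemma lam_pair (U W : zmodType) (f : nat -> U) (g : nat -> W) j :
  lam (fun k => (f k, g k)) j = (lam f j, lam g j).
Proof. by case: j. Qed.

Definition horner_op (T : zmodType) (X : T -> T) (c : nat -> T) (n : nat) : T :=
  \sum_(k < n) iter k X (c k).

Lemma horner_lam_coef (V : zmodType) (c : nat -> nat -> V) n j : deg_lt n c ->
  horner_op (@lam V) c n j = \sum_(k < j.+1) c k (j - k)%N.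
Proof.
move=> cn; rewrite /horner_op fct_sumE.
rewrite (big_ord_widen (n + j.+1) (fun k => iter k (@lam V) (c k) j)) ?leq_addr //.
rewrite (big_ord_widen (n + j.+1) (fun k => c k (j - k)%N)) ?leq_addl //.
rewrite big_mkcond [RHS]big_mkcond; apply: eq_bigr => -[k /= _] _.
rewrite iter_lam ltnS; case: ltnP => // nk.
by case: (k <= j)%N; rewrite ?cn.
Qed.

Section HornerOp.
Variables (T : zmodType) (X : T -> T).
Hypothesis X_additive : zmod_morphism X.

Lemma iter_additive k : zmod_morphism (iter k X).
Proof. by elim: k => [//|k IHk] x y /=; rewrite IHk X_additive. Qed.

Lemma horner_opS c n :
  horner_op X c n.+1 = c 0%N + X (horner_op X (fun k => c k.+1) n).
Proof.
rewrite /horner_op big_ord_recl (zmorph_sum X_additive).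
by congr (_ + _); apply: eq_bigr => k _; rewrite -iterS.
Qed.

Lemma horner_op_widen c n m :
  (n <= m)%N -> deg_lt n c -> horner_op X c m = horner_op X c n.
Proof.
move=> nm cn; rewrite /horner_op (big_ord_widen _ (fun k => iter k X (c k)) nm) [RHS]big_mkcond.
apply: eq_bigr => k _; case: ltnP => // nk.
by rewrite cn // (zmorph0 (iter_additive k)).
Qed.

Lemma horner_op_additive n : zmod_morphism (horner_op X ^~ n).
Proof.
move=> c c'; rewrite /horner_op -sumrB.
by apply: eq_bigr => k _; rewrite -(iter_additive k).
Qed.

Lemma horner_opN c n : horner_op X (fun k => - c k) n = - horner_op X c n.
Proof. exact: (zmorphN (horner_op_additive n)). Qed.

Lemma horner_op_morph (T' : zmodType) (Y : T' -> T') (F : T -> T') :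
    zmod_morphism F -> (forall x, F (X x) = Y (F x)) ->
  forall c n, F (horner_op X c n) = horner_op Y (F \o c) n.
Proof.
move=> F_additive FX c n; rewrite /horner_op (zmorph_sum F_additive).
by apply: eq_bigr => k _ /=; elim: (k : nat) (c k) => //= m IHm x; rewrite FX IHm.
Qed.

End HornerOp.

Lemma horner_lam_coefC (V : zmodType) (f : nat -> V) n :
  deg_lt n f -> horner_op (@lam V) (fun k => coefC (f k)) n = f.
Proof.
move=> fn; have cn : deg_lt n (fun k => coefC (f k)).
  by move=> k nk; rewrite fn // (zmorph0 (@coefC_additive V)).
apply/funext => j; rewrite horner_lam_coef // big_ord_recr /= subnn big1 ?add0r // => k _.
by rewrite /coefC subn_eq0 leqNgt ltn_ord.
Qed.

(** * The substitution of -∂-λ for λ *)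

Section NegSubst.
Variables (V : zmodType) (D : V -> V).
Hypothesis D_additive : zmod_morphism D.

Definition negDlam (f : nat -> V) : nat -> V := fun j => - D (f j) - lam f j.

(* [negsubn n f] is f(-∂-λ), f being given by its coefficients below degree n. *)
Definition negsubn (n : nat) (f : nat -> V) : nat -> V :=
  horner_op negDlam (fun k => coefC (f k)) n.

Lemma negDlam_additive : zmod_morphism negDlam.
Proof.
move=> f g; apply/funext => j; rewrite !fctE /negDlam D_additive lam_additive.
by rewrite !fctE opprB_ACA.
Qed.

Lemma negsubnS n f :
  negsubn n.+1 f = coefC (f 0%N) + negDlam (negsubn n (fun k => f k.+1)).
Proof. exact: (horner_opS negDlam_additive). Qed.

Lemma negsubE (s : seq V) : negsub D s = negsubn (size s) (pc s).
Proof.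
elim: s => [|c s IHs]; first by rewrite /negsubn /horner_op big_ord0.
by rewrite /= negsubnS -IHs; apply/funext => j; rewrite fctE /negDlam addrA.
Qed.

Lemma negsubn_widen n m f : (n <= m)%N -> deg_lt n f -> negsubn m f = negsubn n f.
Proof.
move=> nm fn; apply: horner_op_widen negDlam_additive _ _ _ nm _ => k nk.
by rewrite fn // (zmorph0 (@coefC_additive V)).
Qed.

Lemma negsub_deg (s : seq V) n : deg_lt n (pc s) -> negsub D s = negsubn n (pc s).
Proof.
move=> sn; rewrite negsubE.
have sm : deg_lt (minn n (size s)) (pc s).
  by move=> k; rewrite geq_min => /orP[/sn //|]; apply: deg_lt_pc.
by rewrite (negsubn_widen (geq_minr n _) sm) (negsubn_widen (geq_minl n _) sm).
Qed.

Lemma negsubn_additive n : zmod_morphism (negsubn n).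
Proof.
move=> f g; rewrite /negsubn -(horner_op_additive negDlam_additive).
by congr horner_op; apply/funext => k; rewrite !fctE coefC_additive.
Qed.

Lemma negsubnBD n f g h j :
  negsubn n (fun k => f k - g k + h k) j = negsubn n f j - negsubn n g j + negsubn n h j.
Proof.
have -> : (fun k => f k - g k + h k) = f - g + h by [].
by rewrite (zmorphD (negsubn_additive n)) negsubn_additive.
Qed.

Lemma negsubn_lam n f : negsubn n.+1 (lam f) = negDlam (negsubn n f).
Proof. by rewrite negsubnS (zmorph0 (@coefC_additive V)) add0r. Qed.

Lemma deg_lt_negDlam n f : deg_lt n f -> deg_lt n.+1 (negDlam f).
Proof.
move=> fn [|k] // nk; have fk : f k = 0 := fn k nk.
by rewrite /negDlam /= fk fn ?(ltnW nk) // (zmorph0 D_additive) oppr0 addr0.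
Qed.

Lemma deg_lt_iter_negDlam k c : deg_lt k.+1 (iter k negDlam (coefC c)).
Proof. by elim: k => [[]|k IHk] //=; apply: deg_lt_negDlam. Qed.

Lemma deg_lt_negsubn n f : deg_lt n (negsubn n f).
Proof.
elim: n f => [|n IHn] f k nk; first by rewrite /negsubn /horner_op big_ord0.
rewrite negsubnS fctE (deg_lt_negDlam (IHn _)) // addr0.
by case: k nk.
Qed.

End NegSubst.

Lemma negsubn_morph (V W : zmodType) (D : V -> V) (D' : W -> W) (T : V -> W) :
    zmod_morphism D -> zmod_morphism T -> (forall x, T (D x) = D' (T x)) ->
  forall n f, (fun j => T (negsubn D n f j)) = negsubn D' n (fun k => T (f k)).
Proof.
move=> D_add T_add TD n f.
have Tmap_add : zmod_morphism (fun (g : nat -> V) j => T (g j)).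
  by move=> g h; apply/funext => j; rewrite !fctE T_add.
rewrite /negsubn (horner_op_morph (Y := negDlam D') Tmap_add) => [|g].
  congr horner_op; apply/funext => k; apply/funext => -[|j] //=.
  exact: (zmorph0 T_add).
apply/funext => -[|j]; rewrite /negDlam /= T_add (zmorphN T_add) TD //.
by rewrite (zmorph0 T_add).
Qed.

Lemma negsubn_pair (U W : zmodType) (DU : U -> U) (DW : W -> W) n (f : nat -> U * W) j :
    zmod_morphism DU -> zmod_morphism DW ->
  negsubn (fun x => (DU x.1, DW x.2)) n f j
  = (negsubn DU n (fun k => (f k).1) j, negsubn DW n (fun k => (f k).2) j).
Proof.
move=> DU_add DW_add.
have D_add : zmod_morphism (fun x : U * W => (DU x.1, DW x.2)).
  by move=> [a b] [c d] /=; rewrite DU_add DW_add.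
rewrite -(negsubn_morph D_add (T := fst) (D' := DU)) //.
rewrite -(negsubn_morph D_add (T := snd) (D' := DW)) //.
by case: (negsubn _ n f j).
Qed.

Section SubstTransfer.
Variables (V T : zmodType) (D : V -> V) (Y Z : T -> T) (G : V -> T).
Hypotheses (D_additive : zmod_morphism D) (Y_additive : zmod_morphism Y)
  (Z_additive : zmod_morphism Z) (G_additive : zmod_morphism G).
Hypothesis YZ : forall x, Y (Z x) = Z (Y x).
Hypothesis GD : forall v, G (D v) = Z (G v).

(* If G turns ∂ into Z, then g ↦ Σ Y^k G(g_k) turns ∂ into Z and λ into Y, hence
   -∂-λ into -Z-Y; the truncation at m is harmless as long as n <= m. *)
Lemma horner_op_negsubn n m f : (n <= m)%N ->
  horner_op Y (fun k => G (negsubn D n f k)) m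
  = horner_op (fun x => - Z x - Y x) (fun k => G (f k)) n.
Proof.
pose Gam p (g : nat -> V) := horner_op Y (fun k => G (g k)) p.
have Gam_additive m' : zmod_morphism (Gam m').
  move=> g h; rewrite /Gam -(horner_op_additive Y_additive).
  by congr horner_op; apply/funext => k; rewrite !fctE G_additive.
have Gam_coefC m' c : Gam m'.+1 (coefC c) = G c.
  rewrite /Gam horner_opS //=.
  rewrite -[X in horner_op _ X _](_ : 0 = fun k => G (coefC c k.+1)).
    rewrite /horner_op big1 ?(zmorph0 Y_additive) ?addr0 // => k _.
    exact: (zmorph0 (iter_additive Y_additive _)).
  by apply/funext => k; rewrite /= (zmorph0 G_additive).
have Gam_D m' g : Gam m' (fun k => D (g k)) = Z (Gam m' g).
  rewrite /Gam (horner_op_morph (Y := Y) Z_additive) //.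
  by congr horner_op; apply/funext => k; rewrite /= GD.
have Gam_lam m' g : Gam m'.+1 (lam g) = Y (Gam m' g).
  by rewrite /Gam horner_opS //= (zmorph0 G_additive) add0r.
have Gam_negDlam m' g : deg_lt m' g ->
    Gam m'.+1 (negDlam D g) = - Z (Gam m'.+1 g) - Y (Gam m'.+1 g).
  move=> gm; rewrite -[negDlam D g]/(- (fun j => D (g j)) - lam g).
  rewrite (Gam_additive _) (zmorphN (Gam_additive _)) Gam_D Gam_lam.
  congr (_ - Y _); rewrite /Gam (horner_op_widen Y_additive (leqnSn m')) // => k mk.
  by rewrite gm // (zmorph0 G_additive).
have Gam_iter k m' c : (k < m')%N ->
    Gam m' (iter k (negDlam D) (coefC c)) = iter k (fun x => - Z x - Y x) (G c).
  elim: k m' => [|k IHk] [|m'] // km; first exact: Gam_coefC.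
  rewrite ltnS in km; rewrite /= Gam_negDlam ?IHk //; first exact: ltnW.
  exact: deg_lt_widen km (deg_lt_iter_negDlam D_additive c).
move=> nm; rewrite -[LHS]/(Gam m (negsubn D n f)) /negsubn /horner_op (zmorph_sum (Gam_additive m)).
by apply: eq_bigr => k _; rewrite Gam_iter // (leq_trans _ nm).
Qed.
End SubstTransfer.

Section NegSubstInvolutive.
Variables (V : zmodType) (D : V -> V).
Hypothesis D_additive : zmod_morphism D.

Lemma lam_map (W : zmodType) (T : V -> W) (f : nat -> V) :
  zmod_morphism T -> lam (fun k => T (f k)) = fun j => T (lam f j).
Proof. by move=> T_add; apply/funext => -[|j] //=; rewrite (zmorph0 T_add). Qed.

Lemma coefwise_additive : zmod_morphism (fun (g : nat -> V) j => D (g j)).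
Proof. by move=> g h; apply/funext => j; rewrite !fctE D_additive. Qed.

Lemma negsubnK n m f : (n <= m)%N -> deg_lt n f -> negsubn D m (negsubn D n f) = f.
Proof.
move=> nm fn; rewrite {1}/negsubn.
rewrite (horner_op_negsubn D_additive (negDlam_additive D_additive) coefwise_additive
  (@coefC_additive V)) //; last 2 first.
- move=> g; apply/funext => j.
  by rewrite /negDlam D_additive (zmorphN D_additive) (lam_map _ D_additive).
- by move=> v; apply/funext => -[|j] //=; rewrite (zmorph0 D_additive).
rewrite -[RHS](horner_lam_coefC fn); congr horner_op.
by apply/funext => g; apply/funext => j; rewrite /negDlam opprB addrC subrK.
Qed.

End NegSubstInvolutive.

Section NegsubSeq.
Variables (V : zmodType) (D : V -> V).
Hypothesis D_additive : zmod_morphism D.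

Lemma negsub_eq (s s' : seq V) : pc s = pc s' -> negsub D s = negsub D s'.
Proof.
move=> ss'; have s_deg : deg_lt (size s') (pc s) by rewrite ss'; apply: deg_lt_pc.
by rewrite (negsub_deg D_additive s_deg) ss' -negsubE.
Qed.

Lemma deg_lt_negsub (s : seq V) : deg_lt (size s) (negsub D s).
Proof. by move=> k sk; rewrite negsubE //; exact: (deg_lt_negsubn D_additive (pc s) sk). Qed.

Lemma negsub_sesl (s s' : seq V) : (forall k, pc s' k = - lam (pc s) k) ->
  forall j, negsub D s' j = D (negsub D s j) + lam (negsub D s) j.
Proof.
move=> s's j; have s'E : pc s' = - lam (pc s) by apply/funext.
have s'_deg : deg_lt (size s).+1 (pc s').
  by move=> [|k] // sk; rewrite s's /= (deg_lt_pc (leqnn _) sk) oppr0.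
rewrite (negsub_deg D_additive s'_deg) s'E (negsubE D_additive s).
rewrite (zmorphN (negsubn_additive D_additive _)).
by rewrite (negsubn_lam D_additive) !fctE /negDlam opprD !opprK.
Qed.

Lemma negsub_sesr (s s' : seq V) : (forall k, pc s' k = D (pc s k) + lam (pc s) k) ->
  forall j, negsub D s' j = - lam (negsub D s) j.
Proof.
move=> s's j; have s'E : pc s' = (fun k => D (pc s k)) + lam (pc s) by apply/funext.
have s'_deg : deg_lt (size s).+1 (pc s').
  move=> [|k] // sk; rewrite ltnS in sk; rewrite s's -[lam _ k.+1]/(pc s k).
  by rewrite !(deg_lt_pc (leqnn _) sk, deg_lt_pc (leqnn _) (leqW sk)) (zmorph0 D_additive) addr0.
rewrite (negsub_deg D_additive s'_deg) s'E (zmorphD (negsubn_additive D_additive _)).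
rewrite (negsubn_lam D_additive).
rewrite -(negsubn_morph D_additive D_additive (fun=> erefl)) (negsubE D_additive s).
rewrite (negsubn_widen D_additive (leqnSn _)); last exact: deg_lt_pc.
by rewrite !fctE /negDlam addrA subrr sub0r.
Qed.

Lemma negsub_pc0 (s : seq V) : pc s = 0 -> negsub D s = 0.
Proof. by move=> s0; rewrite (negsubE D_additive) s0 (zmorph0 (negsubn_additive D_additive _)). Qed.

Lemma negsub_nijenhuis (N : V -> V) (s s1 s2 s3 : seq V) :
    zmod_morphism N -> (forall x, N (D x) = D (N x)) ->
    (forall k, pc s k = N (pc s1 k + pc s2 k - N (pc s3 k))) ->
  forall j, negsub D s j = N (negsub D s1 j + negsub D s2 j - N (negsub D s3 j)).
Proof.
move=> N_add ND sE j; set n := (size s + size s1 + size s2 + size s3)%N.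
have Hn (u : seq V) : (size u <= n)%N -> deg_lt n (pc u) by move=> un; apply: deg_lt_pc.
rewrite !(negsub_deg D_additive (Hn _ _)) /n; try lia.
have -> : pc s = fun k => N ((pc s1 + pc s2 - (fun i => N (pc s3 i))) k) by apply/funext.
rewrite -(negsubn_morph D_additive N_add ND) !(negsubn_additive D_additive).
by rewrite (zmorphD (negsubn_additive D_additive _)) -(negsubn_morph D_additive N_add ND).
Qed.

End NegsubSeq.

Section NegsubLinear.
Variables (K : pzRingType) (V : lmodType K) (D : V -> V).
Hypothesis D_lin : linear D.
Let D_additive := zmod_morphism_linear D_lin.

Lemma negsubn_linear n : linear (negsubn D n).
Proof.
move=> k f g; rewrite (zmorphD (negsubn_additive D_additive n)); congr (_ + _).
have kZ : zmod_morphism ( *:%R k : V -> V) by move=> x y; rewrite scalerBr.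
exact: esym (negsubn_morph D_additive kZ (fun x => esym (scalable_linear D_lin k x)) n f).
Qed.

Lemma negsub_linear (U : lmodType K) (F : U -> seq V) :
  (forall j, linear (fun u => pc (F u) j)) -> forall j, linear (fun u => negsub D (F u) j).
Proof.
move=> F_lin j k u u'; set n := (size (F (k *: u + u')%R) + size (F u) + size (F u'))%N.
have Hn (s : seq V) : (size s <= n)%N -> deg_lt n (pc s) by move=> sn; apply: deg_lt_pc.
rewrite !(negsub_deg D_additive (Hn _ _)) /n; try lia.
have -> : pc (F (k *: u + u')) = k *: pc (F u) + pc (F u') by apply/funext => i; apply: F_lin.
by rewrite negsubn_linear.
Qed.

End NegsubLinear.

(** * Polynomials in two variables *)

Section TwoVariables.
Variables (V : zmodType) (D : V -> V).
Hypothesis D_additive : zmod_morphism D.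

(* A polynomial in λ and μ is stored μ-major: [F j i] is the coefficient of μ^j λ^i.
   It is a polynomial in μ over V[λ], on which ∂ acts as [Dlam] = ∂ + λ, so that
   [negsubn Dlam] substitutes -∂-λ-μ for μ.  [lam2] and [lam] multiply by λ and by μ,
   [at_sum f] is f(λ + μ) and [in_mu f] is f(μ). *)
Definition Dlam (p : nat -> V) : nat -> V := fun i => D (p i) + lam p i.

Definition lam2 (F : nat -> nat -> V) : nat -> nat -> V := fun j => lam (F j).

Definition at_sum (f : nat -> V) : nat -> nat -> V :=
  fun j i => f (i + j)%N *+ 'C(i + j, i).

Definition in_mu (f : nat -> V) : nat -> nat -> V := fun j => coefC (f j).

Lemma Dlam_additive : zmod_morphism Dlam.
Proof.
move=> p q; apply/funext => i; rewrite !fctE /Dlam D_additive lam_additive !fctE.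
by rewrite opprD addrACA.
Qed.

Lemma lam2_additive : zmod_morphism lam2.
Proof. by move=> F G; apply/funext => j; rewrite !fctE /lam2 lam_additive. Qed.

Lemma at_sum_additive : zmod_morphism at_sum.
Proof. by move=> f g; apply/funext => j; apply/funext => i; rewrite !fctE /at_sum mulrnBl. Qed.

Lemma at_sum_lam f : at_sum (lam f) = lam2 (at_sum f) + lam (at_sum f).
Proof.
apply/funext => -[|j]; apply/funext => -[|i]; rewrite !fctE /at_sum /lam2 /= ?fun0E.
- by rewrite mul0rn addr0.
- by rewrite addr0 !addn0 !binn.
- by rewrite add0r !add0n !bin0.
by rewrite addSn binS mulrnDr addrC addSnnS.
Qed.

Lemma at_sum_coefC c : at_sum (coefC c) = coefC (coefC c).
Proof.
apply/funext => -[|j]; apply/funext => -[|i];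
  by rewrite /at_sum /coefC ?addn0 ?addnS /= ?mul0rn ?fun0E.
Qed.

Lemma at_sum_expansion n f : deg_lt n f ->
  at_sum f = horner_op (fun F => lam2 F + lam F) (fun k => coefC (coefC (f k))) n.
Proof.
move=> fn; rewrite -{1}(horner_lam_coefC fn).
rewrite (horner_op_morph (Y := fun F => lam2 F + lam F) at_sum_additive) => [|g].
  by congr horner_op; apply/funext => k; rewrite /= at_sum_coefC.
exact: at_sum_lam.
Qed.

Lemma at_sum_negsubn n f : at_sum (negsubn D n f) = negsubn Dlam n (in_mu f).
Proof.
pose LM F := lam2 F + lam F.
pose DD (F : nat -> nat -> V) j i := D (F j i).
have LM_additive : zmod_morphism LM.
  by move=> F G; rewrite /LM lam2_additive lam_additive addrACA opprD.
have DD_additive : zmod_morphism DD.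
  by move=> F G; apply/funext => j; apply/funext => i; rewrite /DD !fctE D_additive.
have C2_additive : zmod_morphism (fun v : V => coefC (coefC v)).
  by move=> u v; rewrite !coefC_additive.
rewrite (at_sum_expansion (deg_lt_negsubn D_additive _)) -/LM.
rewrite (horner_op_negsubn (Z := DD) (G := fun v => coefC (coefC v)) D_additive LM_additive
  DD_additive C2_additive) //; last 2 first.
- move=> F; rewrite /LM /DD /lam2; apply/funext => j; apply/funext => i.
  rewrite !fctE (zmorphD D_additive) (lam_map _ D_additive).
  by case: j => [|j] //=; rewrite !fun0E (zmorph0 D_additive).
- move=> v; apply/funext => -[|j]; apply/funext => -[|i];
    by rewrite /DD /= ?fun0E ?(zmorph0 D_additive).
rewrite /negsubn; congr horner_op; apply/funext => F; apply/funext => j; apply/funext => i.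
by rewrite /negDlam /Dlam /DD /LM /lam2 !fctE !opprD addrA.
Qed.

Lemma in_mu_additive : zmod_morphism in_mu.
Proof. by move=> f g; apply/funext => j; rewrite !fctE /in_mu coefC_additive. Qed.

Lemma deg_lt_in_mu n f : deg_lt n f -> deg_lt n (in_mu f).
Proof. by move=> fn k nk; rewrite /in_mu fn // (zmorph0 (@coefC_additive V)). Qed.

Lemma negsubn_at_sum n f : deg_lt n f -> negsubn Dlam n (at_sum f) = in_mu (negsubn D n f).
Proof.
move=> fn; rewrite -{1}(negsubnK D_additive (leqnn n) fn) at_sum_negsubn.
exact/(negsubnK Dlam_additive (leqnn n))/deg_lt_in_mu/deg_lt_negsubn.
Qed.

Lemma lam_lam2 F : lam (lam2 F) = lam2 (lam F).
Proof. by apply/funext => -[|j] //=; rewrite /lam2 /= (zmorph0 (@lam_additive V)). Qed.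

Lemma lam_Dlam p : lam (Dlam p) = Dlam (lam p).
Proof. by apply/funext => -[|i] //=; rewrite /Dlam /= (zmorph0 D_additive) addr0. Qed.

Lemma horner_lam2_negsubn (H : nat -> nat -> nat -> V) n N :
  horner_op lam2 (fun k => negsubn Dlam N (H k)) n = negsubn Dlam N (horner_op lam2 H n).
Proof.
symmetry; apply: (horner_op_morph (negsubn_additive Dlam_additive N)) => F.
exact: esym (negsubn_morph Dlam_additive (@lam_additive V) lam_Dlam _ _).
Qed.

Lemma horner_lam2E (C : nat -> nat -> nat -> V) n j :
  horner_op lam2 C n j = horner_op (@lam V) (fun k => C k j) n.
Proof. exact: (horner_op_morph (F := fun F => F j)). Qed.

Lemma horner_lam2_in_mu (F : nat -> nat -> V) n : deg_lt n F ->
  horner_op lam2 (fun k => in_mu (F k)) n = fun j i => F i j.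
Proof.
move=> Fn; apply/funext => j; rewrite horner_lam2E horner_lam_coefC // => k nk.
by rewrite Fn.
Qed.

End TwoVariables.

(** * Symmetries of the Jacobi identity *)

Definition jacobiator (A C : zmodType) (brA : A -> A -> seq A) (brC : A -> C -> seq C)
    (a b : A) (c : C) (i j : nat) : C :=
  pc (brC a (pc (brC b c) j)) i - jac_mid brA brC a b c i j - pc (brC b (pc (brC a c) i)) j.

Lemma jacobi_of_jacobiator (A C : zmodType) (brA : A -> A -> seq A) (brC : A -> C -> seq C)
    a b c i j :
  jacobiator brA brC a b c i j = 0 ->
  pc (brC a (pc (brC b c) j)) i = jac_mid brA brC a b c i j + pc (brC b (pc (brC a c) i)) j.
Proof. by move/eqP; rewrite subr_eq0 subr_eq addrC => /eqP. Qed.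

Lemma jacobiator_transfer (A C A' C' : zmodType) (brA : A -> A -> seq A) (brC : A -> C -> seq C)
    (brA' : A' -> A' -> seq A') (brC' : A' -> C' -> seq C') (g : C' -> C) a b c a' b' c' :
    zmod_morphism g ->
    (forall x l, pc (brC a (g x)) l = g (pc (brC' a' x) l)) ->
    (forall x l, pc (brC b (g x)) l = g (pc (brC' b' x) l)) ->
    c = g c' ->
    (forall k l, pc (brC (pc (brA a b) k) c) l = g (pc (brC' (pc (brA' a' b') k) c') l)) ->
  forall i j, jacobiator brA brC a b c i j = g (jacobiator brA' brC' a' b' c' i j).
Proof.
move=> g_add ha hb -> hm i j; rewrite /jacobiator /jac_mid /sub2 hb ha ha hb !g_add.
rewrite (zmorph_sum g_add); congr (_ - _ - _).
by apply: eq_bigr => k _; rewrite hm (zmorphMn g_add).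
Qed.

Lemma sub2C (V : zmodType) (s : seq V) i j : sub2 s i j = sub2 s j i.
Proof. by rewrite /sub2 addnC -[in LHS](bin_sub (leq_addl j i)) addnK. Qed.

Lemma exists_deg_lt (V : zmodType) (F : nat -> seq V) n :
  deg_lt n (fun k => pc (F k)) -> exists N, forall k, deg_lt N (pc (F k)).
Proof.
move=> Fn; exists (\max_(k < n) size (F k)) => k.
case: (ltnP k n) => [kn|nk]; last by move=> j _; rewrite Fn.
by apply: deg_lt_pc; apply: (@leq_bigmax _ (fun k : 'I_n => size (F k)) (Ordinal kn)).
Qed.

Section LbilinearFacts.
Variables (K : pzRingType) (U V W : lmodType K) (br : U -> V -> seq W).
Hypothesis br_bil : lbilinear br.

Lemma lbilinear_linl b j : linear (fun a => pc (br a b) j).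
Proof. by move=> k a a'; apply: br_bil.1. Qed.

Lemma lbilinear_linr a j : linear (fun b => pc (br a b) j).
Proof. by move=> k b b'; apply: br_bil.2. Qed.

Lemma lbilinear_addl b : zmod_morphism (fun a => pc (br a b)).
Proof.
by move=> a a'; apply/funext => j; rewrite !fctE (zmod_morphism_linear (lbilinear_linl b j)).
Qed.

Lemma lbilinear_addr a : zmod_morphism (fun b => pc (br a b)).
Proof.
by move=> b b'; apply/funext => j; rewrite !fctE (zmod_morphism_linear (lbilinear_linr a j)).
Qed.

Lemma lbilinear_Dl a a' b j : pc (br (a + a') b) j = pc (br a b) j + pc (br a' b) j.
Proof. exact: (zmorphD (zmod_morphism_linear (lbilinear_linl b j))). Qed.

Lemma lbilinear_Dr a b b' j : pc (br a (b + b')) j = pc (br a b) j + pc (br a b') j.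
Proof. exact: (zmorphD (zmod_morphism_linear (lbilinear_linr a j))). Qed.

End LbilinearFacts.

Section JacobiatorAdditive.
Variables (K : pzRingType) (V : lmodType K) (br : V -> V -> seq V).
Hypothesis br_bil : lbilinear br.

Lemma jacobiatorDl a a' b c i j :
  jacobiator br br (a + a') b c i j = jacobiator br br a b c i j + jacobiator br br a' b c i j.
Proof.
rewrite /jacobiator !(lbilinear_Dl br_bil, lbilinear_Dr br_bil) -addrBB_ACA; congr (_ - _ - _).
rewrite /jac_mid -big_split; apply: eq_bigr => k _.
by rewrite /sub2 !(lbilinear_Dl br_bil) mulrnDl.
Qed.

Lemma jacobiatorDm a b b' c i j :
  jacobiator br br a (b + b') c i j = jacobiator br br a b c i j + jacobiator br br a b' c i j.
Proof.
rewrite /jacobiator !(lbilinear_Dl br_bil, lbilinear_Dr br_bil) -addrBB_ACA; congr (_ - _ - _).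
rewrite /jac_mid -big_split; apply: eq_bigr => k _.
by rewrite /sub2 lbilinear_Dr // lbilinear_Dl // mulrnDl.
Qed.

Lemma jacobiatorDr a b c c' i j :
  jacobiator br br a b (c + c') i j = jacobiator br br a b c i j + jacobiator br br a b c' i j.
Proof.
rewrite /jacobiator !(lbilinear_Dl br_bil, lbilinear_Dr br_bil) -addrBB_ACA; congr (_ - _ - _).
rewrite /jac_mid -big_split; apply: eq_bigr => k _.
by rewrite /sub2 lbilinear_Dr // mulrnDl.
Qed.

End JacobiatorAdditive.

Section LambdaBracket.
Variables (K : pzRingType) (V : lmodType K) (D : V -> V) (br : V -> V -> seq V).
Hypotheses (D_lin : linear D) (br_bil : lbilinear br) (br_ses : sesquilinear D D D br).
Hypothesis br_skew : forall a b j, pc (br a b) j = - negsub D (br b a) j.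

Let D_additive := zmod_morphism_linear D_lin.
Let br_addl := lbilinear_addl br_bil.
Let br_addr := lbilinear_addr br_bil.

(* The terms [a_λ[b_μ c]], [[a_λ b]_{λ+μ} c] and [b_μ[a_λ c]] of the Jacobi identity. *)
Let inner a b c : nat -> nat -> V := fun j i => pc (br a (pc (br b c) j)) i.
Let middle a b c : nat -> nat -> V := fun j i => jac_mid br br a b c i j.
Let outer a b c : nat -> nat -> V := fun j i => pc (br b (pc (br a c) i)) j.

Lemma pc_skew a b n : deg_lt n (pc (br b a)) -> pc (br a b) = - negsubn D n (pc (br b a)).
Proof. by move=> ban; apply/funext => j; rewrite br_skew (negsub_deg _ ban). Qed.

Lemma at_sum_bracket_D u c :
  at_sum (pc (br (D u) c)) = - (lam2 (at_sum (pc (br u c))) + lam (at_sum (pc (br u c)))).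
Proof.
rewrite -at_sum_lam -(zmorphN (@at_sum_additive V)); congr at_sum.
by apply/funext => j; rewrite br_ses.1.
Qed.

Lemma middle_horner a b c :
  middle a b c = horner_op (@lam2 V) (fun k => at_sum (pc (br (pc (br a b) k) c))) (size (br a b)).
Proof.
apply/funext => j; apply/funext => i; rewrite horner_lam2E horner_lam_coef // => k abk.
by rewrite (deg_lt_pc (leqnn _) abk) (zmorph0 (br_addl c)) (zmorph0 (@at_sum_additive V)).
Qed.

(* [b_μ c] = -[c_{-∂-μ} b], and ∂ becomes ∂ + λ when pulled out of [a_λ ·]. *)
Lemma inner_swap23 a b c N : deg_lt N (pc (br c b)) ->
  inner a b c = - negsubn (Dlam D) N (inner a c b).
Proof.
move=> cbN.
have TD u : pc (br a (D u)) = Dlam D (pc (br a u)) by apply/funext => i; rewrite br_ses.2.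
rewrite /inner (pc_skew cbN) -(negsubn_morph D_additive (br_addr a) TD).
by apply/funext => j; rewrite !fctE (zmorphN (br_addr a)).
Qed.

Lemma deg_lt_br_coefr a b c : deg_lt (size (br a b)) (fun k => pc (br c (pc (br a b) k))).
Proof. by move=> k abk; rewrite (deg_lt_pc (leqnn _) abk) (zmorph0 (br_addr c)). Qed.

Lemma deg_lt_br_coefl a b c : deg_lt (size (br a b)) (fun k => pc (br (pc (br a b) k) c)).
Proof. by move=> k abk; rewrite (deg_lt_pc (leqnn _) abk) (zmorph0 (br_addl c)). Qed.

Lemma middle_swap23 a b c N : (forall k, deg_lt N (pc (br c (pc (br a b) k)))) ->
  middle a b c = - negsubn (Dlam D) N (outer a c b).
Proof.
move=> N_bound; rewrite middle_horner.
have -> : (fun k => at_sum (pc (br (pc (br a b) k) c)))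
    = fun k => - negsubn (Dlam D) N (in_mu (pc (br c (pc (br a b) k)))).
  apply/funext => k.
  by rewrite (pc_skew (N_bound k)) (zmorphN (@at_sum_additive V)) at_sum_negsubn.
rewrite horner_opN ?horner_lam2_negsubn ?horner_lam2_in_mu //; last exact: lam2_additive.
exact: deg_lt_br_coefr.
Qed.

Lemma outer_swap23 a b c N : (forall k, deg_lt N (pc (br (pc (br a c) k) b))) ->
  outer a b c = - negsubn (Dlam D) N (middle a c b).
Proof.
move=> N_bound; rewrite middle_horner.
rewrite /outer -(horner_lam2_in_mu (@deg_lt_br_coefr a c b)).
have -> : (fun k => in_mu (pc (br b (pc (br a c) k))))
    = fun k => - negsubn (Dlam D) N (at_sum (pc (br (pc (br a c) k) b))).
  apply/funext => k.
  by rewrite (pc_skew (N_bound k)) (zmorphN (@in_mu_additive V)) negsubn_at_sum.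
by rewrite horner_opN ?horner_lam2_negsubn //; exact: lam2_additive.
Qed.

(* [b_μ a] = -[a_{-∂-μ} b], and ∂ becomes -(λ+μ) when pulled out of [·_{λ+μ} c],
   which turns -∂-μ into λ. *)
Lemma middle_swap12 a b c i j : jac_mid br br b a c j i = - jac_mid br br a b c i j.
Proof.
set n := size (br a b).
pose G u := at_sum (pc (br u c)).
pose Z (F : nat -> nat -> V) : nat -> nat -> V := - (lam2 F + lam F).
have G_additive : zmod_morphism G := zmod_morphism_comp (@at_sum_additive V) (br_addl c).
have Z_additive : zmod_morphism Z.
  by move=> F F'; rewrite /Z lam2_additive lam_additive addrACA -opprD opprB opprK [RHS]addrC.
have baE : pc (br b a) = - negsubn D n (pc (br a b)) by apply: pc_skew; apply: deg_lt_pc.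
have deg_ba : deg_lt n (fun k => G (pc (br b a) k)).
  by move=> k nk; rewrite baE !fctE (deg_lt_negsubn D_additive) // oppr0 (zmorph0 G_additive).
have -> : jac_mid br br b a c j i = horner_op (@lam (nat -> V)) (fun k => G (pc (br b a) k)) n j i.
  rewrite horner_lam_coef // fct_sumE; apply: eq_bigr => k _.
  by rewrite sub2C.
have -> : (fun k => G (pc (br b a) k)) = fun k => - G (negsubn D n (pc (br a b)) k).
  by apply/funext => k; rewrite baE fctE (zmorphN G_additive).
rewrite horner_opN; last exact: lam_additive.
rewrite (horner_op_negsubn D_additive (@lam_additive _) Z_additive G_additive) //.
- have -> : (fun x => - Z x - lam x) = @lam2 V by apply/funext => x; rewrite /Z opprK addrK.
  by rewrite -middle_horner.
- by move=> F; rewrite /Z (zmorphN (@lam_additive _)) (zmorphD (@lam_additive _)) lam_lam2.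
by move=> v; apply: at_sum_bracket_D.
Qed.

Lemma jacobi_swap23 a b c :
  (forall i j, jacobiator br br a c b i j = 0) -> forall i j, jacobiator br br a b c i j = 0.
Proof.
move=> Jacb.
have [N2 N2_bound] := exists_deg_lt (@deg_lt_br_coefr a b c).
have [N3 N3_bound] := exists_deg_lt (@deg_lt_br_coefl a c b).
set N := (size (br c b) + N2 + N3)%N.
have le1 : (size (br c b) <= N)%N by rewrite /N; lia.
have le2 : (N2 <= N)%N by rewrite /N; lia.
have le3 : (N3 <= N)%N by rewrite /N; lia.
have E1 := @inner_swap23 a b c N (deg_lt_pc le1).
have E2 := @middle_swap23 a b c N (fun k => deg_lt_widen le2 (N2_bound k)).
have E3 := @outer_swap23 a b c N (fun k => deg_lt_widen le3 (N3_bound k)).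
have J0 : inner a c b - middle a c b - outer a c b = 0.
  by apply/funext => j; apply/funext => i; apply: Jacb.
have Jabc : inner a b c - middle a b c - outer a b c = 0.
  rewrite E1 E2 E3; apply: etrans (esym (oppr_sub3 _ _ _)) _.
  rewrite -!(negsubn_additive (Dlam_additive D_additive)) J0.
  by rewrite (zmorph0 (negsubn_additive (Dlam_additive D_additive) _)) oppr0.
by move=> i j; apply: (congr1 (fun F => F j i) Jabc).
Qed.

Lemma jacobi_swap12 a b c :
  (forall i j, jacobiator br br a b c i j = 0) -> forall i j, jacobiator br br b a c j i = 0.
Proof.
move=> Jabc i j; rewrite /jacobiator middle_swap12 -oppr_sub3_rev.
by move: (Jabc i j); rewrite /jacobiator => ->; rewrite oppr0.
Qed.

End LambdaBracket.

(** * The Nijenhuis Lie conformal algebra L0 ⊕ L1 *)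

Section SumAlgebra.
Variables (K : pzRingType) (L0 L1 : lmodType K).
Variables (D0 : L0 -> L0) (D1 : L1 -> L1) (t : L1 -> L0)
  (b00 : L0 -> L0 -> seq L0) (b01 : L0 -> L1 -> seq L1) (b10 : L1 -> L0 -> seq L1)
  (N0 : L0 -> L0) (N1 : L1 -> L1).
Hypothesis S : strict2NLinfty D0 D1 t b00 b01 b10 N0 N1.

Local Notation br := (sum_bracket D1 t b00 b01).
Local Notation sD := (sumD D0 D1).
Local Notation sN := (sumN N0 N1).

Let D0_additive := zmod_morphism_linear (s2_D0 S).
Let D1_additive := zmod_morphism_linear (s2_D1 S).

Lemma pc_sum_bracket p m q n : pc (br (p, m) (q, n)) =
  fun j => (pc (b00 p q) j, pc (b01 p n) j - negsub D1 (b01 q m) j + pc (b01 (t m) n) j).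
Proof.
rewrite /sum_bracket pc_mkseq // => k sk.
have [h1 h2 h3 h4] : [/\ size (b00 p q) <= k, size (b01 p n) <= k,
  size (b01 q m) <= k & size (b01 (t m) n) <= k]%N by split; lia.
by rewrite (deg_lt_negsub D1_additive h3) /pc !nth_default ?subrr ?addr0.
Qed.

Lemma sumD_linear : linear sD.
Proof. by move=> k [p m] [q n]; rewrite /sumD /= (s2_D0 S) (s2_D1 S). Qed.

Lemma sum_bracket_bilinear : lbilinear br.
Proof.
have pairZD k (x x' : L0) (y y' : L1) : k *: (x, y) + (x', y') = (k *: x + x', k *: y + y') by [].
split=> [k [p m] [p' m'] [q n] j | k [p m] [q n] [q' n'] j];
  rewrite !pairZD !pc_sum_bracket pairZD; congr pair.
- exact: (s2_b00_bil S).1.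
- rewrite (s2_t_lin S) !(s2_b01_bil S).1.
  rewrite (negsub_linear (s2_D1 S) (lbilinear_linr (s2_b01_bil S) q)).
  by rewrite addrBD_ACA scalerDr scalerBr.
- exact: (s2_b00_bil S).2.
- rewrite !(s2_b01_bil S).2.
  rewrite (negsub_linear (s2_D1 S) (lbilinear_linl (s2_b01_bil S) m)).
  by rewrite addrBD_ACA scalerDr scalerBr.
Qed.

Lemma sum_bracket_sesquilinear : sesquilinear sD sD sD br.
Proof.
split=> [[p m] [q n] j | [p m] [q n] j]; rewrite /sumD /= !pc_sum_bracket lam_pair /=.
- congr pair; first exact: (s2_b00_ses S).1.
  rewrite (s2_t_D S) !(s2_b01_ses S).1 (negsub_sesr D1_additive ((s2_b01_ses S).2 q m)).
  by rewrite lamBD !opprD.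
- congr pair; first exact: (s2_b00_ses S).2.
  rewrite !(s2_b01_ses S).2 (negsub_sesl D1_additive ((s2_b01_ses S).1 q m)) lamBD.
  by rewrite (zmorphD D1_additive) D1_additive addrBD_ACA.
Qed.

Lemma negsubn_sumD n f j :
  negsubn sD n f j = (negsubn D0 n (fun k => (f k).1) j, negsubn D1 n (fun k => (f k).2) j).
Proof. exact: negsubn_pair D0_additive D1_additive. Qed.

Lemma sum_bracket_skew x y j : pc (br x y) j = - negsub sD (br y x) j.
Proof.
case: x y => [p m] [q n]; set s := br (q, n) (p, m).
have [h1 h2 h3 h4] : [/\ size (b00 q p) <= size s, size (b01 q m) <= size s,
    size (b01 p n) <= size s & size (b01 (t n) m) <= size s]%N.
  by rewrite /s /sum_bracket size_mkseq; split; lia.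
have pairN (x : L0) (y : L1) : - (x, y) = (- x, - y) by [].
rewrite (negsubE (zmod_morphism_linear sumD_linear)) negsubn_sumD pc_sum_bracket pairN /=.
rewrite pc_sum_bracket; congr pair.
  by rewrite (s2_skew00 S) (negsub_deg D0_additive (deg_lt_pc h1)).
rewrite (negsubnBD D1_additive) (negsub_deg D1_additive (deg_lt_pc h2)).
rewrite (negsubE D1_additive (b01 p n)) (negsubnK D1_additive h3 (deg_lt_pc (leqnn _))).
rewrite [pc (b01 (t m) n) j](s2_skew01 S).
have -> : negsub D1 (b10 n (t m)) = negsub D1 (b01 (t n) m).
  by apply: negsub_eq => //; apply/funext => k; rewrite (s2_t_sym S).
rewrite (negsub_deg D1_additive (deg_lt_pc h4)).
by rewrite opprD opprB.
Qed.

Lemma sum_Nijenhuis : is_Nijenhuis sD br sN.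
Proof.
have N1_additive := zmod_morphism_linear (s2_N1_lin S).
split.
- by move=> k [p m] [q n]; rewrite /sumN /= (s2_N0_lin S) (s2_N1_lin S).
- by move=> [p m]; rewrite /sumN /sumD /= (s2_N0_D S) (s2_N1_D S).
move=> [p m] [q n] j; rewrite /sumN /= !pc_sum_bracket /=; congr pair.
  exact: esym (s2_N0 S p q j).
rewrite (s2_tN S) -(s2_N1 S p n j) -(s2_N1 S (t m) n j).
rewrite (negsub_nijenhuis D1_additive N1_additive (s2_N1_D S) (fun k => esym (s2_N1 S q m k))).
by rewrite [negsub D1 (b01 (N0 q) m) j + _]addrC nijenhuis_comb.
Qed.

Let b00_0r x : pc (b00 x 0) = 0 := zmorph0 (lbilinear_addr (s2_b00_bil S) x).
Let b01_0r x : pc (b01 x 0) = 0 := zmorph0 (lbilinear_addr (s2_b01_bil S) x).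
Let b01_0l y : pc (b01 0 y) = 0 := zmorph0 (lbilinear_addl (s2_b01_bil S) y).
Let t0 : t 0 = 0 := zmorph0 (zmod_morphism_linear (s2_t_lin S)).

Lemma pc_sum_bracket00 p q : pc (br (p, 0) (q, 0)) = fun j => (pc (b00 p q) j, 0).
Proof.
apply/funext => j; rewrite pc_sum_bracket t0 !b01_0r (negsub_pc0 D1_additive (b01_0r q)).
by rewrite !fun0E subrr addr0.
Qed.

Lemma pc_sum_bracket01 p n : pc (br (p, 0) (0, n)) = fun j => (0, pc (b01 p n) j).
Proof.
apply/funext => j; rewrite pc_sum_bracket t0 b00_0r b01_0l (negsub_pc0 D1_additive (b01_0l 0)).
by rewrite !fun0E subr0 addr0.
Qed.

Lemma pc_sum_bracket11 m n : pc (br (0, m) (0, n)) = fun j => (0, pc (b01 (t m) n) j).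
Proof.
apply/funext => j; rewrite pc_sum_bracket b00_0r b01_0l (negsub_pc0 D1_additive (b01_0l m)).
by rewrite !fun0E subr0 add0r.
Qed.

Let inl_additive : zmod_morphism (fun x : L0 => ((x, 0) : L0 * L1)).
Proof. by move=> x y; rewrite -[RHS]/(x - y, 0 - 0) subrr. Qed.

Let inr_additive : zmod_morphism (fun y : L1 => ((0, y) : L0 * L1)).
Proof. by move=> x y; rewrite -[RHS]/(0 - 0, x - y) subrr. Qed.

Lemma sum_jacobiator000 p q r i j : jacobiator br br (p, 0) (q, 0) (r, 0) i j = 0.
Proof.
have hbr x y l : pc (br (x, 0) (y, 0)) l = (pc (b00 x y) l, 0) by rewrite pc_sum_bracket00.
rewrite (jacobiator_transfer (brA' := b00) (c' := r) inl_additive (hbr p) (hbr q) erefl).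
  by rewrite /jacobiator (s2_jac000 S).
by move=> k l; rewrite !hbr.
Qed.

Lemma sum_jacobiator001 p q k i j : jacobiator br br (p, 0) (q, 0) (0, k) i j = 0.
Proof.
have hbr x y l : pc (br (x, 0) (0, y)) l = (0, pc (b01 x y) l) by rewrite pc_sum_bracket01.
rewrite (jacobiator_transfer (brA' := b00) (c' := k) inr_additive (hbr p) (hbr q) erefl).
  by rewrite /jacobiator (s2_jac001 S).
by move=> k' l; rewrite pc_sum_bracket00 hbr.
Qed.

Lemma sum_jacobiator011 p n k i j : jacobiator br br (p, 0) (0, n) (0, k) i j = 0.
Proof.
have h01 x y l : pc (br (x, 0) (0, y)) l = (0, pc (b01 x y) l) by rewrite pc_sum_bracket01.
have h11 x y l : pc (br (0, x) (0, y)) l = (0, pc (b01 (t x) y) l) by rewrite pc_sum_bracket11.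
rewrite (jacobiator_transfer (brA' := b00) (c' := k) inr_additive (h01 p) (h11 n) erefl).
  by rewrite /jacobiator (s2_jac001 S).
by move=> k' l; rewrite h01 h11 (s2_t_br S).
Qed.

Lemma sum_jacobiator111 m n k i j : jacobiator br br (0, m) (0, n) (0, k) i j = 0.
Proof.
have h11 x y l : pc (br (0, x) (0, y)) l = (0, pc (b01 (t x) y) l) by rewrite pc_sum_bracket11.
rewrite (jacobiator_transfer (brA' := b00) (c' := k) inr_additive (h11 m) (h11 n) erefl).
  by rewrite /jacobiator (s2_jac001 S).
by move=> k' l; rewrite !h11 (s2_t_br S).
Qed.

Let swap23 :=
  jacobi_swap23 sumD_linear sum_bracket_bilinear sum_bracket_sesquilinear sum_bracket_skew.
Let swap12 :=
  jacobi_swap12 sumD_linear sum_bracket_bilinear sum_bracket_sesquilinear sum_bracket_skew.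

Lemma sum_jacobiator x y z i j : jacobiator br br x y z i j = 0.
Proof.
have J010 p n r : forall i j, jacobiator br br (p, 0) (0, n) (r, 0) i j = 0.
  by apply: swap23 => i' j'; apply: sum_jacobiator001.
have J100 m q r : forall i j, jacobiator br br (0, m) (q, 0) (r, 0) i j = 0.
  by move=> i' j'; apply: swap12 (J010 q m r) j' i'.
have J101 m q k : forall i j, jacobiator br br (0, m) (q, 0) (0, k) i j = 0.
  by move=> i' j'; apply: swap12 (sum_jacobiator011 q m k) j' i'.
have J110 m n r : forall i j, jacobiator br br (0, m) (0, n) (r, 0) i j = 0.
  by apply: swap23 => i' j'; apply: J101.
have splitE (w : L0 * L1) : w = (w.1, 0) + (0, w.2).
  by case: w => a b; rewrite -[RHS]/(a + 0, 0 + b) addr0 add0r.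
have br_bil := sum_bracket_bilinear.
rewrite (splitE x) (splitE y) (splitE z).
rewrite !(jacobiatorDl br_bil, jacobiatorDm br_bil, jacobiatorDr br_bil).
rewrite sum_jacobiator000 sum_jacobiator001 sum_jacobiator011 sum_jacobiator111.
by rewrite J010 J100 J101 J110 !addr0.
Qed.

End SumAlgebra.

Theorem proposition4p11 (L0 L1 : lmodType Cplx)
    (D0 : L0 -> L0) (D1 : L1 -> L1) (t : L1 -> L0)
    (b00 : L0 -> L0 -> seq L0) (b01 : L0 -> L1 -> seq L1) (b10 : L1 -> L0 -> seq L1)
    (N0 : L0 -> L0) (N1 : L1 -> L1) :
  strict2NLinfty D0 D1 t b00 b01 b10 N0 N1 ->
  is_NijenhuisLCA (sumD D0 D1) (sum_bracket D1 t b00 b01) (sumN N0 N1).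
Proof.
move=> S; split; last exact: sum_Nijenhuis S.
split.
- exact: sumD_linear S.
- exact: sum_bracket_bilinear S.
- exact: sum_bracket_sesquilinear S.
- exact: sum_bracket_skew S.
by move=> a b c i j; apply: jacobi_of_jacobiator; exact: (sum_jacobiator S a b c i j).
Qed.
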